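(* There is a set $S$ and a scenario $f\in{}^{\mathbb{R}}S$ such that for every $T_3$-anonymous predictor $P:{}^{\mathbb{R}}S\to{}^{\mathbb{R}}S$, the set $\{x\in\mathbb{R}: P(f)(x)=f(x)\}$ is countable.
   Context: For a set $S$, ${}^{\mathbb{R}}S$ is the set of all functions (scenarios) $f:\mathbb{R}\to S$. A predictor is a function $P:{}^{\mathbb{R}}S\to{}^{\mathbb{R}}S$ such that for all $f,g\in{}^{\mathbb{R}}S$ and $x\in\mathbb{R}$, if $f\upharpoonright(-\infty,x)=g\upharpoonright(-\infty,x)$ then $P(f)(x)=P(g)(x)$. For a family $T$ of functions $\mathbb{R}\to\mathbb{R}$, $P$ is $T$-anonymous if $P(f\circ t)=P(f)\circ t$ for all scenarios $f$ and all $t\in T$. $T_3$ is the set of all infinitely differentiable strictly increasing bijections $\mathbb{R}\to\mathbb{R}$. *)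

From Stdlib Require Export Reals.
Open Scope R_scope.

Definition predictor {S : Type} (P : (R -> S) -> (R -> S)) : Prop :=
  forall (f g : R -> S) (x : R),
    (forall y : R, y < x -> f y = g y) -> P f x = P g x.

Definition smooth (t : R -> R) : Prop :=
  exists D : nat -> R -> R,
    D O = t /\ forall (n : nat) (x : R), derivable_pt_lim (D n) x (D (S n) x).

Definition strictly_increasing (t : R -> R) : Prop :=
  forall x y : R, x < y -> t x < t y.

Definition bijective_RR (t : R -> R) : Prop :=
  (forall x y : R, t x = t y -> x = y) /\ (forall y : R, exists x : R, t x = y).

Definition T3 (t : R -> R) : Prop :=
  smooth t /\ strictly_increasing t /\ bijective_RR t.

Definition anonymous {S : Type} (T : (R -> R) -> Prop)
    (P : (R -> S) -> (R -> S)) : Prop :=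
  forall (f : R -> S) (t : R -> R),
    T t -> P (fun x => f (t x)) = (fun x => P f (t x)).

Definition countable_set (A : R -> Prop) : Prop :=
  exists g : R -> nat, forall x y : R, A x -> A y -> g x = g y -> x = y.

From Stdlib Require Import ZArith List Cantor Lra Lia Psatz.
From Stdlib Require Import ClassicalEpsilon FunctionalExtensionality PropExtensionality.
From Coquelicot Require Import Coquelicot.
Open Scope R_scope.

(** Let [f] send a point to its orbit under the countably many increasing maps
    [partial_map m l]; orbits are countable.  For [a] in [m, m + 1) there is a [T3] map [u]
    with [u m = a] that adds the binary digits of [a - m] one smooth ramp at a time, the
    ramps accumulating at [m] (it stays smooth at [m] because the [k]-th ramp has height
    [2^-(k+1)] but derivatives growing only polynomially in [k]); below [m] it agrees pointwise with members of the family, so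
    [f o u = f] there.  Anonymity and the predictor property then give [P f a = P f m]:
    all correct predictions in [m, m + 1) lie in the single orbit [P f m]. *)

Definition derivable_n (n : nat) (f : R -> R) : Prop :=
  exists D : nat -> R -> R, D O = f /\
    forall k, (k < n)%nat -> forall x, derivable_pt_lim (D k) x (D (S k) x).

Lemma derivable_n_O f : derivable_n 0 f.
Proof. exists (fun _ => f); split; [reflexivity|intros; lia]. Qed.

Lemma derivable_n_S n f f' :
  (forall x, derivable_pt_lim f x (f' x)) -> derivable_n n f' -> derivable_n (S n) f.
Proof.
  intros Hd [D [H0 HD]].
  exists (fun k => match k with O => f | S k => D k end); split; [reflexivity|].
  intros [|k] Hk x; simpl.
  - rewrite H0; apply Hd.
  - apply HD; lia.
Qed.

Lemma derivable_n_S_inv n f : derivable_n (S n) f ->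
  exists f', (forall x, derivable_pt_lim f x (f' x)) /\ derivable_n n f'.
Proof.
  intros [D [H0 HD]]; exists (D 1%nat); split.
  - intros x; rewrite <- H0; apply HD; lia.
  - exists (fun k => D (S k)); split; [reflexivity|].
    intros k Hk x; apply HD; lia.
Qed.

Lemma derivable_n_pred n f : derivable_n (S n) f -> derivable_n n f.
Proof. intros [D [H0 HD]]; exists D; split; [auto|intros; apply HD; lia]. Qed.

Lemma derivable_n_ext n f g : (forall x, f x = g x) -> derivable_n n f -> derivable_n n g.
Proof. intros H; replace g with f; [auto|apply functional_extensionality; auto]. Qed.

Lemma smooth_derivable_n f : (forall n, derivable_n n f) -> smooth f.
Proof.
  intros H.
  assert (HD : forall n, {D : nat -> R -> R | D O = f /\
    forall k, (k < n)%nat -> forall x, derivable_pt_lim (D k) x (D (S k) x)}).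
  { intros n; apply constructive_indefinite_description, H. }
  set (Dn := fun n => proj1_sig (HD n)).
  assert (HD0 : forall n, Dn n O = f) by (intros n; exact (proj1 (proj2_sig (HD n)))).
  assert (HDd : forall n k, (k < n)%nat -> forall x,
    derivable_pt_lim (Dn n k) x (Dn n (S k) x)) by (intros n; exact (proj2 (proj2_sig (HD n)))).
  clearbody Dn.
  (* derivatives are unique, so the sequences chosen for different n agree *)
  assert (Hagree : forall k n1 n2, (k <= n1)%nat -> (k <= n2)%nat -> Dn n1 k = Dn n2 k).
  { induction k; intros n1 n2 H1 H2.
    - now rewrite !HD0.
    - apply functional_extensionality; intros x.
      apply uniqueness_limite with (f := Dn n1 k) (x := x).
      + apply HDd; lia.
      + rewrite (IHk n1 n2) by lia; apply HDd; lia. }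
  exists (fun k => Dn (S k) k); split.
  - apply HD0.
  - intros n x; rewrite (Hagree n (S n) (S (S n))) by lia; apply HDd; lia.
Qed.

Lemma dpl_eq f x l l' : derivable_pt_lim f x l -> l = l' -> derivable_pt_lim f x l'.
Proof. now intros H <-. Qed.

Lemma dpl_plus f g x l1 l2 : derivable_pt_lim f x l1 -> derivable_pt_lim g x l2 ->
  derivable_pt_lim (fun y => f y + g y) x (l1 + l2).
Proof. apply derivable_pt_lim_plus. Qed.

Lemma dpl_mult f g x l1 l2 : derivable_pt_lim f x l1 -> derivable_pt_lim g x l2 ->
  derivable_pt_lim (fun y => f y * g y) x (l1 * g x + f x * l2).
Proof. apply derivable_pt_lim_mult. Qed.

Lemma dpl_scal c f x l : derivable_pt_lim f x l ->
  derivable_pt_lim (fun y => c * f y) x (c * l).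
Proof. apply derivable_pt_lim_scal. Qed.

Lemma dpl_const c x : derivable_pt_lim (fun _ => c) x 0.
Proof. apply derivable_pt_lim_const. Qed.

Lemma dpl_affine a b x : derivable_pt_lim (fun y => a * y + b) x a.
Proof.
  apply (dpl_eq _ _ (a * 1 + 0)); [|ring].
  apply dpl_plus; [apply dpl_scal, derivable_pt_lim_id|apply dpl_const].
Qed.

Lemma dpl_comp f g x l1 l2 : derivable_pt_lim g x l1 -> derivable_pt_lim f (g x) l2 ->
  derivable_pt_lim (fun y => f (g y)) x (l2 * l1).
Proof. apply (derivable_pt_lim_comp g f). Qed.

Lemma dpl_inv g x l : derivable_pt_lim g x l -> g x <> 0 ->
  derivable_pt_lim (fun y => / g y) x (- l / (g x) ^ 2).
Proof.
  intros H Hg; apply is_derive_Reals, is_derive_inv; auto.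
  now apply is_derive_Reals.
Qed.

Lemma dpl_local f g x l : (exists d, 0 < d /\ forall y, Rabs (y - x) < d -> f y = g y) ->
  derivable_pt_lim g x l -> derivable_pt_lim f x l.
Proof.
  intros [d [Hd Hfg]] Hg eps Heps.
  destruct (Hg eps Heps) as [del Hdel].
  assert (Hm : 0 < Rmin d del) by (apply Rmin_pos; [lra|apply cond_pos]).
  exists (mkposreal _ Hm); intros h Hh0 Hh; simpl in Hh.
  rewrite (Hfg (x + h)), (Hfg x).
  - apply Hdel; auto; eapply Rlt_le_trans; [apply Hh|apply Rmin_r].
  - rewrite Rminus_eq_0, Rabs_R0; lra.
  - replace (x + h - x) with h by ring; eapply Rlt_le_trans; [apply Hh|apply Rmin_l].
Qed.

Lemma derivable_n_plus n : forall f g,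
  derivable_n n f -> derivable_n n g -> derivable_n n (fun x => f x + g x).
Proof.
  induction n; intros f g Hf Hg; [apply derivable_n_O|].
  destruct (derivable_n_S_inv _ _ Hf) as [f' [Df Cf]].
  destruct (derivable_n_S_inv _ _ Hg) as [g' [Dg Cg]].
  apply derivable_n_S with (fun x => f' x + g' x); [intros x; apply dpl_plus; auto|auto].
Qed.

Lemma derivable_n_scal n : forall c f, derivable_n n f -> derivable_n n (fun x => c * f x).
Proof.
  induction n; intros c f Hf; [apply derivable_n_O|].
  destruct (derivable_n_S_inv _ _ Hf) as [f' [Df Cf]].
  apply derivable_n_S with (fun x => c * f' x); [intros x; apply dpl_scal; auto|auto].
Qed.

Lemma derivable_n_mult n : forall f g,
  derivable_n n f -> derivable_n n g -> derivable_n n (fun x => f x * g x).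
Proof.
  induction n; intros f g Hf Hg; [apply derivable_n_O|].
  destruct (derivable_n_S_inv _ _ Hf) as [f' [Df Cf]].
  destruct (derivable_n_S_inv _ _ Hg) as [g' [Dg Cg]].
  apply derivable_n_S with (fun x => f' x * g x + f x * g' x).
  - intros x; apply dpl_mult; auto.
  - apply derivable_n_plus; apply IHn; auto; apply derivable_n_pred; auto.
Qed.

Lemma derivable_n_inv n : forall g,
  (forall x, g x <> 0) -> derivable_n n g -> derivable_n n (fun x => / g x).
Proof.
  induction n; intros g Hg0 Hg; [apply derivable_n_O|].
  destruct (derivable_n_S_inv _ _ Hg) as [g' [Dg Cg]].
  apply derivable_n_S with (fun x => (-1 * g' x) * (/ g x * / g x)).
  - intros x; eapply dpl_eq; [apply dpl_inv; auto|field; auto].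
  - apply derivable_n_mult; [apply derivable_n_scal; auto|].
    apply derivable_n_mult; apply IHn; auto; apply derivable_n_pred; auto.
Qed.

Lemma derivable_n_affine_comp n : forall a b f,
  derivable_n n f -> derivable_n n (fun x => f (a * x + b)).
Proof.
  induction n; intros a b f Hf; [apply derivable_n_O|].
  destruct (derivable_n_S_inv _ _ Hf) as [f' [Df Cf]].
  apply derivable_n_S with (fun x => a * f' (a * x + b)).
  - intros x; eapply dpl_eq; [apply dpl_comp; [apply dpl_affine|apply Df]|ring].
  - apply derivable_n_scal, IHn; auto.
Qed.

(** * The flat function exp(-1/x) and a smooth step *)

Lemma exp_pow_INR m s : exp s ^ m = exp (INR m * s).
Proof.
  induction m; simpl pow; [now rewrite Rmult_0_l, exp_0|].
  rewrite IHm, <- exp_plus, S_INR; f_equal; ring.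
Qed.

(* from (t/(j+1))^(j+1) <= exp (t/(j+1))^(j+1) = exp t *)
Lemma pow_mul_exp_opp_le j t : 0 < t -> t ^ j * exp (- t) <= INR (S j) ^ (S j) / t.
Proof.
  intros Ht; set (q := INR (S j)).
  assert (Hq : 0 < q) by (apply lt_0_INR; lia).
  assert (Hle : (t / q) ^ (S j) <= exp t).
  { replace (exp t) with (exp (t / q) ^ (S j)) by (rewrite exp_pow_INR; fold q; f_equal; field; lra).
    pose proof (exp_ineq1_le (t / q)); pose proof (Rdiv_lt_0_compat t q Ht Hq).
    apply pow_incr; lra. }
  unfold Rdiv in Hle; rewrite Rpow_mult_distr, pow_inv in Hle.
  assert (Hqp : 0 < q ^ S j) by (apply pow_lt; lra).
  assert (Het : 0 < exp t) by apply exp_pos.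
  rewrite exp_Ropp.
  apply Rmult_le_reg_r with (exp t * t); [nra|].
  replace (t ^ j * / exp t * (exp t * t)) with (t ^ S j) by (simpl; field; lra).
  replace (q ^ S j / t * (exp t * t)) with (q ^ S j * exp t) by (field; lra).
  apply Rmult_le_reg_r with (/ q ^ S j); [apply Rinv_0_lt_compat; lra|].
  replace (q ^ S j * exp t * / q ^ S j) with (exp t) by (field; lra).
  exact Hle.
Qed.

Definition flat_pow (k : nat) (x : R) : R :=
  if Rlt_dec 0 x then exp (- / x) * (/ x) ^ k else 0.

Lemma flat_pow_nonneg k x : 0 <= flat_pow k x.
Proof.
  unfold flat_pow; destruct (Rlt_dec 0 x); [|lra].
  apply Rmult_le_pos; [apply Rlt_le, exp_pos|apply pow_le, Rlt_le, Rinv_0_lt_compat; lra].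
Qed.

Lemma flat_pow_le k h : 0 < h -> flat_pow k h <= INR (S k) ^ (S k) * h.
Proof.
  intros Hh; unfold flat_pow; destruct (Rlt_dec 0 h); [|lra].
  pose proof (pow_mul_exp_opp_le k (/ h) ltac:(apply Rinv_0_lt_compat; lra)) as K.
  rewrite Rmult_comm; replace (INR (S k) ^ S k * h) with (INR (S k) ^ S k / / h); [exact K|].
  field; lra.
Qed.

Lemma flat_pow_deriv_0 k : derivable_pt_lim (flat_pow k) 0 0.
Proof.
  intros eps Heps.
  set (C := INR (S (S k)) ^ (S (S k))).
  assert (HC : 0 < C) by (apply pow_lt, lt_0_INR; lia).
  assert (Hd : 0 < eps / C) by (apply Rdiv_lt_0_compat; lra).
  exists (mkposreal _ Hd); intros h Hh0 Hh; simpl in Hh.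
  rewrite Rplus_0_l; unfold flat_pow at 2; destruct (Rlt_dec 0 0); [lra|].
  destruct (Rlt_dec 0 h) as [Hp|Hp].
  - replace ((flat_pow k h - 0) / h - 0) with (flat_pow (S k) h)
      by (unfold flat_pow; destruct (Rlt_dec 0 h); [simpl; field; lra|lra]).
    pose proof (flat_pow_le (S k) h Hp); pose proof (flat_pow_nonneg (S k) h).
    rewrite Rabs_pos_eq in Hh |- * by lra.
    apply Rle_lt_trans with (C * h); [unfold C; lra|].
    apply Rmult_lt_reg_l with (/ C); [apply Rinv_0_lt_compat; lra|].
    replace (/ C * (C * h)) with h by (field; lra).
    replace (/ C * eps) with (eps / C) by (unfold Rdiv; ring); lra.
  - unfold flat_pow; destruct (Rlt_dec 0 h); [lra|].
    replace ((0 - 0) / h - 0) with 0 by (field; auto); rewrite Rabs_R0; lra.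
Qed.

Lemma flat_pow_deriv k x :
  derivable_pt_lim (flat_pow k) x (flat_pow (S (S k)) x - INR k * flat_pow (S k) x).
Proof.
  destruct (Rlt_dec 0 x) as [Hx|Hx]; [|destruct (Rlt_dec x 0) as [Hx'|Hx']].
  - apply dpl_local with (fun y => exp (- / y) * (/ y) ^ k).
    { exists x; split; auto; intros y Hy; unfold flat_pow.
      destruct (Rlt_dec 0 y); auto; apply Rabs_def2 in Hy; lra. }
    unfold flat_pow; destruct (Rlt_dec 0 x); [|lra].
    apply is_derive_Reals; auto_derive; [lra|].
    destruct k; [simpl; field; lra|rewrite S_INR; simpl; field; lra].
  - apply dpl_local with (fun _ => 0).
    { exists (- x); split; [lra|]; intros y Hy; unfold flat_pow.
      destruct (Rlt_dec 0 y); auto; apply Rabs_def2 in Hy; lra. }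
    unfold flat_pow; destruct (Rlt_dec 0 x); [lra|].
    eapply dpl_eq; [apply dpl_const|ring].
  - replace x with 0 by lra; unfold flat_pow at 2 3; destruct (Rlt_dec 0 0); [lra|].
    eapply dpl_eq; [apply flat_pow_deriv_0|ring].
Qed.

Lemma derivable_n_flat_pow n : forall k, derivable_n n (flat_pow k).
Proof.
  induction n; intros k; [apply derivable_n_O|].
  apply derivable_n_S with (fun x => flat_pow (S (S k)) x + - INR k * flat_pow (S k) x).
  - intros x; eapply dpl_eq; [apply flat_pow_deriv|ring].
  - apply derivable_n_plus; [|apply derivable_n_scal]; apply IHn.
Qed.

Lemma flat_pos x : 0 < x -> 0 < flat_pow 0 x.
Proof.
  intros; unfold flat_pow; destruct (Rlt_dec 0 x); [|lra].
  simpl; rewrite Rmult_1_r; apply exp_pos.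
Qed.

Lemma flat_nonpos x : x <= 0 -> flat_pow 0 x = 0.
Proof. intros; unfold flat_pow; destruct (Rlt_dec 0 x); lra. Qed.

Lemma flat_incr x y : x <= y -> flat_pow 0 x <= flat_pow 0 y.
Proof.
  intros Hxy; unfold flat_pow; simpl.
  destruct (Rlt_dec 0 x), (Rlt_dec 0 y); rewrite ?Rmult_1_r; try lra.
  - destruct (Req_dec x y) as [->|Hne]; [lra|].
    apply Rlt_le, exp_increasing, Ropp_lt_contravar, Rinv_lt_contravar; nra.
  - apply Rlt_le, exp_pos.
Qed.

Definition smooth_step (x : R) : R :=
  flat_pow 0 x / (flat_pow 0 x + flat_pow 0 (1 - x)).

Lemma smooth_step_den_pos x : 0 < flat_pow 0 x + flat_pow 0 (1 - x).
Proof.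
  pose proof (flat_pow_nonneg 0 x); pose proof (flat_pow_nonneg 0 (1 - x)).
  destruct (Rlt_dec 0 x); [pose proof (flat_pos x r)|pose proof (flat_pos (1 - x))]; lra.
Qed.

Lemma smooth_step_smooth : smooth smooth_step.
Proof.
  apply smooth_derivable_n; intros n.
  apply derivable_n_mult; [apply derivable_n_flat_pow|].
  apply derivable_n_inv; [intros x; pose proof (smooth_step_den_pos x); lra|].
  apply derivable_n_plus; [apply derivable_n_flat_pow|].
  apply derivable_n_ext with (fun x => flat_pow 0 (-1 * x + 1)); [intros; f_equal; ring|].
  apply derivable_n_affine_comp, derivable_n_flat_pow.
Qed.

Lemma smooth_step_0 x : x <= 0 -> smooth_step x = 0.
Proof. intros; unfold smooth_step; rewrite flat_nonpos by lra; unfold Rdiv; ring. Qed.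

Lemma smooth_step_1 x : 1 <= x -> smooth_step x = 1.
Proof.
  intros; unfold smooth_step; rewrite (flat_nonpos (1 - x)) by lra.
  pose proof (flat_pos x ltac:(lra)); field; lra.
Qed.

Lemma smooth_step_bounds x : 0 <= smooth_step x <= 1.
Proof.
  unfold smooth_step; pose proof (smooth_step_den_pos x).
  pose proof (flat_pow_nonneg 0 x); pose proof (flat_pow_nonneg 0 (1 - x)).
  split; [apply Rdiv_le_0_compat; lra|].
  apply Rmult_le_reg_r with (flat_pow 0 x + flat_pow 0 (1 - x)); auto.
  unfold Rdiv; rewrite Rmult_assoc, Rinv_l; lra.
Qed.

Lemma smooth_step_incr x y : x <= y -> smooth_step x <= smooth_step y.
Proof.
  intros Hxy; unfold smooth_step.
  pose proof (smooth_step_den_pos x); pose proof (smooth_step_den_pos y).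
  pose proof (flat_incr x y Hxy); pose proof (flat_incr (1 - y) (1 - x) ltac:(lra)).
  pose proof (flat_pow_nonneg 0 x); pose proof (flat_pow_nonneg 0 (1 - y)).
  set (a := flat_pow 0 x) in *; set (a' := flat_pow 0 (1 - x)) in *.
  set (b := flat_pow 0 y) in *; set (b' := flat_pow 0 (1 - y)) in *.
  apply Rmult_le_reg_r with ((a + a') * (b + b')); [nra|].
  replace (a / (a + a') * ((a + a') * (b + b'))) with (a * (b + b')) by (field; lra).
  replace (b / (b + b') * ((a + a') * (b + b'))) with (b * (a + a')) by (field; lra).
  nra.
Qed.

Definition step_D : nat -> R -> R :=
  proj1_sig (constructive_indefinite_description _ smooth_step_smooth).

Lemma step_D_O : step_D 0 = smooth_step.
Proof. exact (proj1 (proj2_sig (constructive_indefinite_description _ smooth_step_smooth))). Qed.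

Lemma step_D_deriv n x : derivable_pt_lim (step_D n) x (step_D (S n) x).
Proof.
  exact (proj2 (proj2_sig (constructive_indefinite_description _ smooth_step_smooth)) n x).
Qed.

Lemma deriv_const_left g t c l :
  (forall y, y <= t -> g y = c) -> derivable_pt_lim g t l -> l = 0.
Proof.
  intros Hg Hd; destruct (Req_dec l 0) as [|Hl]; auto; exfalso.
  destruct (Hd (Rabs l) (Rabs_pos_lt _ Hl)) as [del Hdel]; pose proof (cond_pos del).
  specialize (Hdel (- (del / 2)) ltac:(lra)).
  rewrite Rabs_Ropp, Rabs_pos_eq in Hdel by lra; specialize (Hdel ltac:(lra)).
  rewrite (Hg (t + - (del / 2))), (Hg t) in Hdel by lra.
  replace ((c - c) / - (del / 2) - l) with (- l) in Hdel by (field; lra).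
  rewrite Rabs_Ropp in Hdel; lra.
Qed.

Lemma deriv_const_right g t c l :
  (forall y, t <= y -> g y = c) -> derivable_pt_lim g t l -> l = 0.
Proof.
  intros Hg Hd; destruct (Req_dec l 0) as [|Hl]; auto; exfalso.
  destruct (Hd (Rabs l) (Rabs_pos_lt _ Hl)) as [del Hdel]; pose proof (cond_pos del).
  specialize (Hdel (del / 2) ltac:(lra)).
  rewrite Rabs_pos_eq in Hdel by lra; specialize (Hdel ltac:(lra)).
  rewrite (Hg (t + del / 2)), (Hg t) in Hdel by lra.
  replace ((c - c) / (del / 2) - l) with (- l) in Hdel by (field; lra).
  rewrite Rabs_Ropp in Hdel; lra.
Qed.

Lemma step_D_left n t : t <= 0 -> step_D n t = 0.
Proof.
  revert t; induction n; intros t Ht.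
  - rewrite step_D_O; apply smooth_step_0; auto.
  - apply (deriv_const_left (step_D n) t 0); [intros; apply IHn; lra|apply step_D_deriv].
Qed.

Lemma step_D_right n t : 1 <= t -> step_D (S n) t = 0.
Proof.
  revert t; induction n; intros t Ht.
  - apply (deriv_const_right (step_D 0) t 1); [|apply step_D_deriv].
    intros; rewrite step_D_O; apply smooth_step_1; lra.
  - apply (deriv_const_right (step_D (S n)) t 0); [intros; apply IHn; lra|apply step_D_deriv].
Qed.

(* continuous on [0, 1] and constant outside *)
Lemma step_D_bounded n : exists M, 0 <= M /\ forall t, Rabs (step_D n t) <= M.
Proof.
  destruct (continuity_ab_maj (fun t => Rabs (step_D n t)) 0 1 ltac:(lra)) as [t0 [HM _]].
  { intros c _; apply (continuity_pt_comp (step_D n) Rabs); [|apply Rcontinuity_abs].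
    apply derivable_continuous_pt; exists (step_D (S n) c); apply step_D_deriv. }
  exists (Rmax 1 (Rabs (step_D n t0))); split; [apply Rle_trans with 1; [lra|apply Rmax_l]|].
  intros t; destruct (Rle_dec t 0); [|destruct (Rle_dec 1 t)].
  - rewrite step_D_left, Rabs_R0 by auto; apply Rle_trans with 1; [lra|apply Rmax_l].
  - destruct n.
    + rewrite step_D_O, smooth_step_1, Rabs_R1 by auto; apply Rmax_l.
    + rewrite step_D_right, Rabs_R0 by auto; apply Rle_trans with 1; [lra|apply Rmax_l].
  - apply Rle_trans with (Rabs (step_D n t0)); [apply HM; lra|apply Rmax_r].
Qed.

(** * Binary digits, finite sums and ramps *)

Definition digit_weight (k : nat) : R := (/2) ^ (S k).

(* greedy binary expansion: [bin_trunc x k] is [x] truncated to its first [k] digits *)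
Fixpoint bin_trunc (x : R) (k : nat) : R :=
  match k with
  | O => 0
  | S k => bin_trunc x k + (if Rle_dec (bin_trunc x k + digit_weight k) x then digit_weight k else 0)
  end.

Definition bin_digitb (x : R) (k : nat) : bool :=
  if Rle_dec (bin_trunc x k + digit_weight k) x then true else false.

Definition bool01 (b : bool) : R := if b then 1 else 0.

Definition bin_digit (x : R) (k : nat) : R := bool01 (bin_digitb x k).

Lemma digit_weight_pos k : 0 < digit_weight k.
Proof. apply pow_lt; lra. Qed.

Lemma bin_digit_bounds x k : 0 <= bin_digit x k <= 1.
Proof. unfold bin_digit, bool01; destruct (bin_digitb x k); lra. Qed.

Lemma bin_trunc_S x k : bin_trunc x (S k) = bin_trunc x k + bin_digit x k * digit_weight k.
Proof. unfold bin_digit, bool01, bin_digitb; simpl; destruct (Rle_dec _ x); ring. Qed.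

Lemma bin_trunc_approx x k : 0 <= x < 1 -> bin_trunc x k <= x < bin_trunc x k + (/2) ^ k.
Proof.
  intros Hx; induction k; [simpl; lra|].
  assert (E : digit_weight k = (/2) ^ k / 2) by (unfold digit_weight; simpl; field).
  replace ((/2) ^ (S k)) with ((/2) ^ k / 2) by (simpl; field).
  rewrite bin_trunc_S; unfold bin_digit, bool01, bin_digitb.
  destruct (Rle_dec (bin_trunc x k + digit_weight k) x); rewrite E in *; lra.
Qed.

Fixpoint sum_lt (g : nat -> R) (N : nat) : R :=
  match N with O => 0 | S N => sum_lt g N + g N end.

Lemma sum_lt_ext g g' N : (forall k, (k < N)%nat -> g k = g' k) -> sum_lt g N = sum_lt g' N.
Proof. induction N; intros H; simpl; auto; rewrite IHN, H; auto. Qed.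

Lemma sum_lt_0 g N : (forall k, (k < N)%nat -> g k = 0) -> sum_lt g N = 0.
Proof. induction N; intros H; simpl; auto; rewrite IHN, H; auto; ring. Qed.

Lemma sum_lt_le g g' N : (forall k, g k <= g' k) -> sum_lt g N <= sum_lt g' N.
Proof. intros H; induction N; simpl; [lra|specialize (H N); lra]. Qed.

Lemma sum_lt_support g N M :
  (forall k, (N <= k)%nat -> g k = 0) -> (N <= M)%nat -> sum_lt g M = sum_lt g N.
Proof. intros H HM; induction HM; auto; simpl; rewrite IHHM, H by lia; ring. Qed.

Lemma sum_lt_support2 g N0 N1 : (forall k, (N0 <= k)%nat -> g k = 0) ->
  (forall k, (N1 <= k)%nat -> g k = 0) -> sum_lt g N0 = sum_lt g N1.
Proof.
  intros H0 H1.
  rewrite <- (sum_lt_support g N0 (Nat.max N0 N1)), <- (sum_lt_support g N1 (Nat.max N0 N1));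
    auto; lia.
Qed.

Lemma sum_lt_deriv (g : nat -> R -> R) (g' : nat -> R) x N :
  (forall k, derivable_pt_lim (g k) x (g' k)) ->
  derivable_pt_lim (fun y => sum_lt (fun k => g k y) N) x (sum_lt g' N).
Proof. intros H; induction N; simpl; [apply dpl_const|apply dpl_plus; auto]. Qed.

Lemma sum_lt_bin_trunc x j : sum_lt (fun k => bin_digit x k * digit_weight k) j = bin_trunc x j.
Proof. induction j; simpl; auto; rewrite IHj, <- bin_trunc_S; reflexivity. Qed.

(* The [k]-th ramp runs from 0 to 1 while [y] runs over [ramp_start k, ramp_start (S k)];
   these intervals tile [-1, 0). *)

Definition ramp_start (k : nat) : R := - / INR (S k).
Definition ramp_slope (k : nat) : R := INR (S k) * INR (S (S k)).
Definition ramp (k : nat) (y : R) : R := ramp_slope k * y + (INR k + 2).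

Lemma INR_S_pos k : 0 < INR (S k).
Proof. apply lt_0_INR; lia. Qed.

Lemma ramp_slope_pos k : 0 < ramp_slope k.
Proof. apply Rmult_lt_0_compat; apply INR_S_pos. Qed.

Lemma ramp_incr k y y' : y <= y' -> ramp k y <= ramp k y'.
Proof. intros; unfold ramp; pose proof (ramp_slope_pos k); nra. Qed.

Lemma ramp_eq k y : ramp k y = INR (S (S k)) * (INR (S k) * y + 1).
Proof. unfold ramp, ramp_slope; rewrite !S_INR; ring. Qed.

Lemma ramp_neg k y : y < ramp_start k -> ramp k y < 0.
Proof.
  intros H; rewrite ramp_eq; unfold ramp_start in H.
  pose proof (INR_S_pos k); pose proof (INR_S_pos (S k)).
  apply Rmult_lt_compat_l with (r := INR (S k)) in H; auto.
  replace (INR (S k) * - / INR (S k)) with (-1) in H by (field; lra); nra.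
Qed.

Lemma ramp_ge1 k y : ramp_start (S k) <= y -> 1 <= ramp k y.
Proof.
  intros H; rewrite ramp_eq; unfold ramp_start in H.
  pose proof (INR_S_pos k); pose proof (INR_S_pos (S k)).
  apply Rmult_le_compat_l with (r := INR (S (S k))) in H; [|lra].
  replace (INR (S (S k)) * - / INR (S (S k))) with (-1) in H by (field; lra).
  rewrite (S_INR (S k)) in *; nra.
Qed.

Lemma ramp_start_incr k k' : (k <= k')%nat -> ramp_start k <= ramp_start k'.
Proof.
  intros H; apply Ropp_le_contravar, Rinv_le_contravar; [apply INR_S_pos|apply le_INR; lia].
Qed.

Lemma ramp_done k j h : (k < j)%nat -> ramp_start j <= h -> 1 <= ramp k h.
Proof. intros; apply ramp_ge1, Rle_trans with (ramp_start j); auto; apply ramp_start_incr; lia. Qed.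

Definition ramp_bound (y : R) : nat := Z.to_nat (up (- / y)).

Lemma ramp_bound_spec y k : y < 0 -> (ramp_bound y <= k)%nat -> y < ramp_start k.
Proof.
  intros Hy Hk; unfold ramp_bound in Hk; apply le_INR in Hk.
  destruct (archimed (- / y)) as [H1 _].
  assert (Hp : 0 < - / y) by (pose proof (Rinv_lt_0_compat y Hy); lra).
  rewrite INR_IZR_INZ, Z2Nat.id in Hk by (apply le_IZR; simpl; lra).
  unfold ramp_start; rewrite S_INR.
  assert (Hlt : - / y < INR k + 1) by lra.
  apply Rinv_lt_contravar in Hlt; [|pose proof (pos_INR k); nra].
  rewrite <- Rinv_opp, Rinv_inv in Hlt; lra.
Qed.

Lemma ramp_active h : -1 <= h < 0 -> exists j, ramp_start j <= h < ramp_start (S j).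
Proof.
  intros [H1 H2].
  assert (Hgen : forall N, h < ramp_start N -> exists j, ramp_start j <= h < ramp_start (S j)).
  { induction N; intros HN.
    - exfalso; unfold ramp_start in HN; simpl in HN; rewrite Rinv_1 in HN; lra.
    - destruct (Rlt_dec h (ramp_start N)); auto; exists N; lra. }
  apply (Hgen (ramp_bound h)), ramp_bound_spec; auto.
Qed.

(** * The correction term and its derivatives *)

(* [corr x 0] rises smoothly from 0 on [y <= -1] to [x] on [y >= 0], adding the [k]-th binary
   digit of [x] along the [k]-th ramp; [corr x n] is its [n]-th derivative. *)

Definition ramp_term (x : R) (n : nat) (y : R) (k : nat) : R :=
  bin_digit x k * digit_weight k * ramp_slope k ^ n * step_D n (ramp k y).

Definition corr (x : R) (n : nat) (y : R) : R :=
  if Rlt_dec y 0 then sum_lt (ramp_term x n y) (ramp_bound y)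
  else match n with O => x | S _ => 0 end.

Lemma ramp_term_unstarted x n y y' k :
  y <= y' -> y' < 0 -> (ramp_bound y' <= k)%nat -> ramp_term x n y k = 0.
Proof.
  intros H1 H2 H3; unfold ramp_term; rewrite step_D_left; [ring|].
  pose proof (ramp_bound_spec y' k H2 H3); pose proof (ramp_neg k y' H).
  pose proof (ramp_incr k y y' H1); lra.
Qed.

Lemma ramp_term_deriv x n k y :
  derivable_pt_lim (fun y => ramp_term x n y k) y (ramp_term x (S n) y k).
Proof.
  unfold ramp_term, ramp; eapply dpl_eq.
  - apply dpl_scal, dpl_comp; [|apply step_D_deriv].
    apply (dpl_affine (ramp_slope k) (INR k + 2)).
  - simpl; ring.
Qed.

Lemma corr_near_neg x n y0 y : y0 < 0 -> y < y0 / 2 ->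
  corr x n y = sum_lt (ramp_term x n y) (ramp_bound (y0 / 2)).
Proof.
  intros H0 Hy; unfold corr; destruct (Rlt_dec y 0); [|lra].
  apply sum_lt_support2; intros k Hk;
    [apply (ramp_term_unstarted x n y y k)|apply (ramp_term_unstarted x n y (y0 / 2) k)];
    auto; lra.
Qed.

Lemma corr_deriv_neg x n y0 : y0 < 0 -> derivable_pt_lim (corr x n) y0 (corr x (S n) y0).
Proof.
  intros H0; rewrite (corr_near_neg x (S n) y0 y0) by lra.
  apply dpl_local with (fun y => sum_lt (fun k => ramp_term x n y k) (ramp_bound (y0 / 2))).
  - exists (- y0 / 2); split; [lra|]; intros y Hy.
    apply corr_near_neg; auto; apply Rabs_def2 in Hy; lra.
  - apply sum_lt_deriv; intros k; apply ramp_term_deriv.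
Qed.

Lemma corr_deriv_pos x n y0 : 0 < y0 -> derivable_pt_lim (corr x n) y0 (corr x (S n) y0).
Proof.
  intros H0; unfold corr at 2; destruct (Rlt_dec y0 0); [lra|].
  apply dpl_local with (fun _ => match n with O => x | S _ => 0 end); [|apply dpl_const].
  exists y0; split; [lra|]; intros y Hy; apply Rabs_def2 in Hy.
  unfold corr; destruct (Rlt_dec y 0); [lra|auto].
Qed.

Lemma corr_active x n h j : h < 0 -> ramp_start j <= h < ramp_start (S j) ->
  corr x n h = sum_lt (ramp_term x n h) j + ramp_term x n h j.
Proof.
  intros Hh [Hj1 Hj2]; unfold corr; destruct (Rlt_dec h 0); [|lra].
  change (sum_lt (ramp_term x n h) j + ramp_term x n h j) with (sum_lt (ramp_term x n h) (S j)).
  apply sum_lt_support2; intros k Hk.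
  - apply (ramp_term_unstarted x n h h k); auto; lra.
  - unfold ramp_term; rewrite step_D_left; [ring|].
    apply Rlt_le, ramp_neg, Rlt_le_trans with (ramp_start (S j)); auto.
    apply ramp_start_incr; lia.
Qed.

Lemma ramp_term_0_bounds x y k : 0 <= ramp_term x 0 y k <= bin_digit x k * digit_weight k.
Proof.
  unfold ramp_term; rewrite step_D_O, pow_O, Rmult_1_r.
  pose proof (smooth_step_bounds (ramp k y)); pose proof (bin_digit_bounds x k).
  pose proof (digit_weight_pos k).
  assert (0 <= bin_digit x k * digit_weight k) by nra; split; nra.
Qed.

Lemma ramp_term_0_done x h j : ramp_start j <= h -> sum_lt (ramp_term x 0 h) j = bin_trunc x j.
Proof.
  intros H; rewrite <- sum_lt_bin_trunc; apply sum_lt_ext; intros k Hk.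
  unfold ramp_term; rewrite step_D_O, smooth_step_1 by (apply (ramp_done k j); auto).
  simpl; ring.
Qed.

Lemma ramp_term_S_done x n h j : ramp_start j <= h -> sum_lt (ramp_term x (S n) h) j = 0.
Proof.
  intros H; apply sum_lt_0; intros k Hk.
  unfold ramp_term; rewrite step_D_right by (apply (ramp_done k j); auto); ring.
Qed.

Lemma half_le_exp_opp_half : /2 <= exp (- / 2).
Proof.
  assert (H1 : exp (/2) * exp (/2) = exp 1) by (rewrite <- exp_plus; f_equal; field).
  pose proof exp_le_3; pose proof (exp_pos (/2)).
  rewrite exp_Ropp; apply Rinv_le_contravar; nra.
Qed.

(* [(/2)^j] is [4 (/2)^(j+2) <= 4 exp (-(j+2)/2)]; then [pow_mul_exp_opp_le] at [(j+2)/2] *)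
Lemma pow_mul_half_pow_le p j :
  INR (S (S j)) ^ p * (/2) ^ j <= 8 * 2 ^ p * INR (S p) ^ (S p) / INR (S (S j)).
Proof.
  set (r := INR (S (S j))); assert (Hr : 0 < r) by apply INR_S_pos.
  assert (Hhalf : (/2) ^ j <= 4 * exp (- (r / 2))).
  { replace ((/2) ^ j) with (4 * (/2) ^ (S (S j))) by (simpl; field).
    apply Rmult_le_compat_l; [lra|].
    apply Rle_trans with (exp (- / 2) ^ (S (S j))).
    - apply pow_incr; pose proof half_le_exp_opp_half; lra.
    - rewrite exp_pow_INR; fold r; right; f_equal; field. }
  assert (Hrp : r ^ p = 2 ^ p * (r / 2) ^ p) by (rewrite <- Rpow_mult_distr; f_equal; field).
  pose proof (pow_mul_exp_opp_le p (r / 2) ltac:(lra)) as Hexp.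
  pose proof (pow_le (r / 2) p ltac:(lra)); pose proof (pow_lt 2 p ltac:(lra)).
  rewrite Hrp.
  apply Rle_trans with (4 * 2 ^ p * ((r / 2) ^ p * exp (- (r / 2)))).
  - replace (4 * 2 ^ p * ((r / 2) ^ p * exp (- (r / 2))))
      with (2 ^ p * (r / 2) ^ p * (4 * exp (- (r / 2)))) by ring.
    apply Rmult_le_compat_l; [nra|auto].
  - apply Rle_trans with (4 * 2 ^ p * (INR (S p) ^ S p / (r / 2))).
    + apply Rmult_le_compat_l; [lra|auto].
    + right; field; lra.
Qed.

Lemma pow_mul_half_pow_eventually_lt p C eps : 0 <= C -> 0 < eps ->
  exists J, forall j, (J <= j)%nat -> C * INR (S (S j)) ^ p * (/2) ^ j < eps.
Proof.
  intros HC He.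
  set (K := C * (8 * 2 ^ p * INR (S p) ^ (S p))).
  assert (HK : 0 <= K).
  { apply Rmult_le_pos; auto; apply Rmult_le_pos; [pose proof (pow_lt 2 p); lra|].
    apply pow_le, pos_INR. }
  exists (Z.to_nat (up (K / eps))); intros j Hj.
  set (r := INR (S (S j))); assert (Hr0 : 0 < r) by apply INR_S_pos.
  assert (HrK : K / eps < r).
  { destruct (archimed (K / eps)) as [A1 _].
    assert (0 <= K / eps) by (apply Rdiv_le_0_compat; lra).
    apply le_INR in Hj; rewrite INR_IZR_INZ, Z2Nat.id in Hj by (apply le_IZR; simpl; lra).
    unfold r; rewrite !S_INR; lra. }
  apply Rle_lt_trans with (K / r).
  - rewrite Rmult_assoc; unfold K, Rdiv; rewrite Rmult_assoc.
    apply Rmult_le_compat_l; auto; apply pow_mul_half_pow_le.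
  - apply Rmult_lt_reg_r with (r / eps); [apply Rdiv_lt_0_compat; lra|].
    replace (K / r * (r / eps)) with (K / eps) by (field; lra).
    replace (eps * (r / eps)) with r by (field; lra); auto.
Qed.

Lemma corr_0 x n : corr x n 0 = match n with O => x | S _ => 0 end.
Proof. unfold corr; destruct (Rlt_dec 0 0); [lra|auto]. Qed.

(* on the [j]-th ramp only the [j]-th term of [corr x n] is not yet settled *)
Lemma corr_active_diff_le x n M h j : 0 <= x < 1 -> 0 <= M ->
  (forall t, Rabs (step_D n t) <= M) -> h < 0 -> ramp_start j <= h < ramp_start (S j) ->
  Rabs (corr x n h - corr x n 0) <= (M + 1) * INR (S (S j)) ^ (2 * n) * (/2) ^ j.
Proof.
  intros Hx HM0 HM Hh Hj.
  set (r := INR (S (S j))); assert (Hr : 0 < r) by apply INR_S_pos.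
  pose proof (pow_lt (/2) j ltac:(lra)) as Hhalf.
  pose proof (bin_digit_bounds x j); pose proof (digit_weight_pos j).
  assert (Hw : digit_weight j <= (/2) ^ j) by (unfold digit_weight; simpl; lra).
  rewrite corr_0, (corr_active x n h j Hh Hj); destruct n as [|n].
  - rewrite (ramp_term_0_done x h j (proj1 Hj)); change (2 * 0)%nat with 0%nat.
    rewrite pow_O, Rmult_1_r.
    pose proof (bin_trunc_approx x j Hx); pose proof (bin_trunc_approx x (S j) Hx).
    pose proof (ramp_term_0_bounds x h j); rewrite bin_trunc_S in *.
    rewrite Rabs_left1 by nra; nra.
  - rewrite (ramp_term_S_done x n h j (proj1 Hj)), Rplus_0_l, Rminus_0_r.
    assert (Hslope : ramp_slope j ^ S n <= r ^ (2 * S n)).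
    { rewrite pow_mult; apply pow_incr; split; [apply Rlt_le, ramp_slope_pos|].
      unfold ramp_slope; fold r; replace (r ^ 2) with (r * r) by ring.
      apply Rmult_le_compat_r; [lra|apply le_INR; lia]. }
    pose proof (pow_le (ramp_slope j) (S n) (Rlt_le _ _ (ramp_slope_pos j))).
    pose proof (HM (ramp j h)); pose proof (Rabs_pos (step_D (S n) (ramp j h))).
    unfold ramp_term; rewrite !Rabs_mult, (Rabs_pos_eq (bin_digit x j)),
      (Rabs_pos_eq (digit_weight j)), (Rabs_pos_eq (ramp_slope j ^ S n)) by lra.
    set (D := Rabs (step_D (S n) (ramp j h))) in *.
    set (L := ramp_slope j ^ S n) in *; set (Q := r ^ (2 * S n)) in *.
    apply Rle_trans with ((/2) ^ j * Q * M); [|nra].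
    apply Rle_trans with (1 * digit_weight j * L * D);
      [repeat apply Rmult_le_compat_r; lra|].
    rewrite Rmult_1_l; replace ((/2) ^ j * Q * M) with ((/2) ^ j * (Q * M)) by ring.
    replace (digit_weight j * L * D) with (digit_weight j * (L * D)) by ring.
    apply Rmult_le_compat; try nra.
Qed.

Lemma corr_deriv_0 x n : 0 <= x < 1 -> derivable_pt_lim (corr x n) 0 (corr x (S n) 0).
Proof.
  intros Hx eps Heps; replace (corr x (S n) 0) with 0 by (rewrite corr_0; reflexivity).
  destruct (step_D_bounded n) as [M [HM0 HM]].
  destruct (pow_mul_half_pow_eventually_lt (2 * n + 1) (M + 1) eps) as [J HJ]; [lra|auto|].
  assert (HJp : 0 < INR J + 1) by (pose proof (pos_INR J); lra).
  assert (Hd : 0 < / (INR J + 1)) by (apply Rinv_0_lt_compat; lra).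
  assert (Hd1 : / (INR J + 1) <= 1).
  { rewrite <- Rinv_1; apply Rinv_le_contravar; [lra|pose proof (pos_INR J); lra]. }
  exists (mkposreal _ Hd); intros h Hh0 Hh; simpl in Hh; rewrite Rplus_0_l, Rminus_0_r.
  destruct (Rlt_dec 0 h) as [Hp|Hnp].
  - replace (corr x n h) with (corr x n 0) by (unfold corr; destruct (Rlt_dec h 0),
      (Rlt_dec 0 0); auto; lra).
    replace ((corr x n 0 - corr x n 0) / h) with 0 by (field; lra); rewrite Rabs_R0; lra.
  - assert (Hneg : h < 0) by lra; rewrite Rabs_left in Hh by lra.
    destruct (ramp_active h ltac:(lra)) as [j Hj].
    assert (HjJ : (J <= j)%nat).
    { destruct (le_lt_dec J j) as [|Hlt]; auto; exfalso.
      pose proof (ramp_start_incr (S j) J ltac:(lia)) as Hs.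
      unfold ramp_start at 2 in Hs; rewrite S_INR in Hs; lra. }
    specialize (HJ j HjJ).
    set (r := INR (S (S j))) in *; assert (Hr : 0 < r) by apply INR_S_pos.
    assert (Hrh : / r <= - h) by (unfold ramp_start in Hj; fold r in Hj; lra).
    pose proof (corr_active_diff_le x n M h j Hx HM0 HM Hneg Hj) as Hdiff; fold r in Hdiff.
    unfold Rdiv; rewrite Rabs_mult, Rabs_inv, (Rabs_left h) by auto.
    apply Rle_lt_trans with ((M + 1) * r ^ (2 * n) * (/2) ^ j * r).
    + apply Rmult_le_compat; [apply Rabs_pos|apply Rlt_le, Rinv_0_lt_compat; lra|exact Hdiff|].
      rewrite <- (Rinv_inv r); apply Rinv_le_contravar; [apply Rinv_0_lt_compat|]; lra.
    + rewrite pow_add, pow_1 in HJ; lra.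
Qed.

Lemma corr_deriv x n y : 0 <= x < 1 -> derivable_pt_lim (corr x n) y (corr x (S n) y).
Proof.
  intros Hx; destruct (Rlt_dec y 0); [apply corr_deriv_neg; auto|].
  destruct (Rlt_dec 0 y); [apply corr_deriv_pos; auto|].
  replace y with 0 by lra; apply corr_deriv_0; auto.
Qed.

Lemma corr_0_bounds x y : 0 <= x < 1 -> 0 <= corr x 0 y <= x.
Proof.
  intros Hx; unfold corr; destruct (Rlt_dec y 0); [|lra].
  pose proof (bin_trunc_approx x (ramp_bound y) Hx).
  rewrite <- sum_lt_bin_trunc in H; split.
  - rewrite <- (sum_lt_0 (fun _ => 0) (ramp_bound y)) by auto.
    apply sum_lt_le; intros; apply ramp_term_0_bounds.
  - eapply Rle_trans; [apply sum_lt_le; intros; apply ramp_term_0_bounds|lra].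
Qed.

Lemma corr_0_incr x y y' : 0 <= x < 1 -> y <= y' -> corr x 0 y <= corr x 0 y'.
Proof.
  intros Hx Hy; destruct (Rlt_dec y' 0) as [Hy'|Hy'];
    [|pose proof (corr_0_bounds x y Hx); unfold corr at 2; destruct (Rlt_dec y' 0); lra].
  set (N := Nat.max (ramp_bound y) (ramp_bound y')).
  unfold corr; destruct (Rlt_dec y 0), (Rlt_dec y' 0); try lra.
  assert (Hsupp : forall z, z < 0 -> (ramp_bound z <= N)%nat ->
    sum_lt (ramp_term x 0 z) (ramp_bound z) = sum_lt (ramp_term x 0 z) N).
  { intros z Hz HN; symmetry; apply sum_lt_support; auto.
    intros k Hk; apply (ramp_term_unstarted x 0 z z k); auto; lra. }
  rewrite !Hsupp by (auto; unfold N; lia).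
  apply sum_lt_le; intros k; unfold ramp_term; rewrite step_D_O, pow_O, Rmult_1_r.
  apply Rmult_le_compat_l; [pose proof (bin_digit_bounds x k); pose proof (digit_weight_pos k); nra|].
  apply smooth_step_incr, ramp_incr; auto.
Qed.

Definition shift_map (m x z : R) : R := z + corr x 0 (z - m).

Definition shift_map_D (m x : R) (n : nat) (z : R) : R :=
  match n with O => z | S O => 1 | _ => 0 end + corr x n (z - m).

Lemma shift_map_D_deriv m x n z : 0 <= x < 1 ->
  derivable_pt_lim (shift_map_D m x n) z (shift_map_D m x (S n) z).
Proof.
  intros Hx; unfold shift_map_D; apply dpl_plus.
  - destruct n as [|[|n]]; [apply derivable_pt_lim_id|apply dpl_const|apply dpl_const].
  - eapply dpl_eq; [apply dpl_comp with (l1 := 1); [|apply corr_deriv; auto]|ring].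
    eapply dpl_eq; [apply dpl_plus; [apply derivable_pt_lim_id|apply (dpl_const (- m))]|ring].
Qed.

Lemma shift_map_smooth m x : 0 <= x < 1 -> smooth (shift_map m x).
Proof.
  intros Hx; exists (shift_map_D m x); split; [reflexivity|].
  intros n z; apply shift_map_D_deriv; auto.
Qed.

Lemma shift_map_incr m x : 0 <= x < 1 -> strictly_increasing (shift_map m x).
Proof.
  intros Hx z z' H; unfold shift_map.
  pose proof (corr_0_incr x (z - m) (z' - m) Hx ltac:(lra)); lra.
Qed.

Lemma shift_map_bijective m x : 0 <= x < 1 -> bijective_RR (shift_map m x).
Proof.
  intros Hx; split.
  - intros z z' H; destruct (Rtotal_order z z') as [Hl|[He|Hg]]; auto;
      [pose proof (shift_map_incr m x Hx z z' Hl)|pose proof (shift_map_incr m x Hx z' z Hg)]; lra.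
  - intros w; destruct (IVT (fun z => shift_map m x z - w) (w - 1) (w + 1)) as [z [_ Hz]].
    + intros z; apply derivable_continuous_pt; exists (shift_map_D m x 1 z + 0).
      apply dpl_plus; [apply (shift_map_D_deriv m x 0); auto|apply dpl_const].
    + lra.
    + unfold shift_map; pose proof (corr_0_bounds x (w - 1 - m) Hx); lra.
    + unfold shift_map; pose proof (corr_0_bounds x (w + 1 - m) Hx); lra.
    + exists z; lra.
Qed.

Lemma shift_map_T3 m x : 0 <= x < 1 -> T3 (shift_map m x).
Proof.
  intros Hx; split; [|split]; [apply shift_map_smooth|apply shift_map_incr|apply shift_map_bijective];
    auto.
Qed.

Lemma shift_map_at m x : shift_map m x m = m + x.
Proof. unfold shift_map; rewrite Rminus_eq_0, corr_0; reflexivity. Qed.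

(** * A countable family of increasing maps and its orbits *)

Definition partial_map (m : Z) (l : list bool) (z : R) : R :=
  z + sum_lt (fun k => bool01 (nth k l false) * digit_weight k * smooth_step (ramp k (z - IZR m)))
    (length l).

Definition bin_prefix (x : R) (N : nat) : list bool := map (bin_digitb x) (seq 0 N).

(* below [m] only the finitely many ramps started so far matter *)
Lemma shift_map_below (m : Z) x z : z < IZR m ->
  shift_map (IZR m) x z = partial_map m (bin_prefix x (ramp_bound (z - IZR m))) z.
Proof.
  intros Hz; unfold shift_map, partial_map, corr; destruct (Rlt_dec (z - IZR m) 0); [|lra].
  unfold bin_prefix; rewrite length_map, length_seq; f_equal.
  apply sum_lt_ext; intros k Hk; unfold ramp_term, bin_digit.
  rewrite step_D_O, pow_O, Rmult_1_r, nth_indep with (d' := bin_digitb x 0)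
    by (rewrite length_map, length_seq; auto).
  rewrite map_nth, seq_nth by auto; reflexivity.
Qed.

Lemma partial_map_injective m l z z' : partial_map m l z = partial_map m l z' -> z = z'.
Proof.
  assert (Hincr : forall z z', z < z' -> partial_map m l z < partial_map m l z').
  { intros y y' H; unfold partial_map.
    assert (sum_lt (fun k => bool01 (nth k l false) * digit_weight k *
              smooth_step (ramp k (y - IZR m))) (length l) <=
            sum_lt (fun k => bool01 (nth k l false) * digit_weight k *
              smooth_step (ramp k (y' - IZR m))) (length l)); [|lra].
    apply sum_lt_le; intros k; apply Rmult_le_compat_l.
    - pose proof (digit_weight_pos k); unfold bool01; destruct (nth k l false); nra.
    - apply smooth_step_incr, ramp_incr; lra. }
  intros H; destruct (Rtotal_order z z') as [Hl|[He|Hg]]; auto;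
    [pose proof (Hincr _ _ Hl)|pose proof (Hincr _ _ Hg)]; lra.
Qed.

(* a generator [(m, l, true)] applies [partial_map m l], [(m, l, false)] its inverse *)
Definition generator : Type := (Z * list bool * bool)%type.

Definition gen_step (s : generator) (z w : R) : Prop :=
  let '(m, l, forward) := s in if forward then w = partial_map m l z else z = partial_map m l w.

Fixpoint gen_path (z : R) (ls : list generator) (w : R) : Prop :=
  match ls with
  | nil => z = w
  | s :: ls' => exists y, gen_step s z y /\ gen_path y ls' w
  end.

Definition orbit (z w : R) : Prop := exists ls, gen_path z ls w.

Definition gen_inv (s : generator) : generator := let '(m, l, d) := s in (m, l, negb d).

Lemma gen_step_inv s z y : gen_step s z y -> gen_step (gen_inv s) y z.
Proof. destruct s as [[m l] []]; simpl; auto. Qed.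

Lemma gen_step_functional s z y y' : gen_step s z y -> gen_step s z y' -> y = y'.
Proof.
  destruct s as [[m l] []]; simpl; intros H1 H2; [congruence|].
  apply (partial_map_injective m l); congruence.
Qed.

Lemma gen_path_app z l1 y l2 w : gen_path z l1 y -> gen_path y l2 w -> gen_path z (l1 ++ l2) w.
Proof.
  revert z; induction l1 as [|s l1 IH]; simpl; intros z H1 H2; [subst; auto|].
  destruct H1 as [y' [Hs Hp]]; exists y'; auto.
Qed.

Lemma gen_path_rev z l w : gen_path z l w -> gen_path w (rev (map gen_inv l)) z.
Proof.
  revert z; induction l as [|s l IH]; simpl; intros z H; auto.
  destruct H as [y [Hs Hp]]; apply gen_path_app with y; [apply IH; auto|].
  exists z; split; [apply gen_step_inv; auto|reflexivity].
Qed.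

Lemma gen_path_functional z l w w' : gen_path z l w -> gen_path z l w' -> w = w'.
Proof.
  revert z; induction l as [|s l IH]; simpl; intros z H1 H2; [congruence|].
  destruct H1 as [y [Hs Hp]], H2 as [y' [Hs' Hp']].
  rewrite (gen_step_functional s z y y' Hs Hs') in Hp; eauto.
Qed.

Lemma orbit_refl z : orbit z z.
Proof. exists nil; reflexivity. Qed.

Lemma orbit_sym z w : orbit z w -> orbit w z.
Proof. intros [l H]; exists (rev (map gen_inv l)); apply gen_path_rev; auto. Qed.

Lemma orbit_trans z y w : orbit z y -> orbit y w -> orbit z w.
Proof. intros [l1 H1] [l2 H2]; exists (l1 ++ l2); apply gen_path_app with y; auto. Qed.

Lemma orbit_eq z w : orbit z w -> orbit z = orbit w.
Proof.
  intros H; apply functional_extensionality; intros y; apply propositional_extensionality.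
  split; intros Hy; [apply orbit_trans with z; auto; apply orbit_sym|apply orbit_trans with w];
    auto.
Qed.

Lemma orbit_partial_map m l z : orbit (partial_map m l z) = orbit z.
Proof.
  symmetry; apply orbit_eq; exists ((m, l, true) :: nil).
  exists (partial_map m l z); split; reflexivity.
Qed.

Lemma to_nat_injective a b c d : Cantor.to_nat (a, b) = Cantor.to_nat (c, d) -> a = c /\ b = d.
Proof.
  intros H; apply (f_equal Cantor.of_nat) in H; rewrite !Cantor.cancel_of_to in H.
  injection H; auto.
Qed.

Definition nat_of_Z (z : Z) : nat := Cantor.to_nat (Z.to_nat z, Z.to_nat (- z)).

Lemma nat_of_Z_injective a b : nat_of_Z a = nat_of_Z b -> a = b.
Proof. unfold nat_of_Z; intros H; apply to_nat_injective in H; lia. Qed.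

Lemma b2n_injective a b : Nat.b2n a = Nat.b2n b -> a = b.
Proof. destruct a, b; simpl; congruence. Qed.

Fixpoint nat_of_list {A : Type} (e : A -> nat) (l : list A) : nat :=
  match l with nil => 0 | a :: l => S (Cantor.to_nat (e a, nat_of_list e l)) end.

Lemma nat_of_list_injective {A : Type} (e : A -> nat) :
  (forall a b, e a = e b -> a = b) ->
  forall l l', nat_of_list e l = nat_of_list e l' -> l = l'.
Proof.
  intros He l; induction l as [|a l IH]; intros [|b l'] H; cbn [nat_of_list] in H; try discriminate; auto.
  apply eq_add_S, to_nat_injective in H; destruct H as [Hab Hl].
  f_equal; auto.
Qed.

Definition nat_of_generator (s : generator) : nat :=
  let '(m, l, d) := s in
  Cantor.to_nat (nat_of_Z m, Cantor.to_nat (nat_of_list Nat.b2n l, Nat.b2n d)).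

Lemma nat_of_generator_injective s s' : nat_of_generator s = nat_of_generator s' -> s = s'.
Proof.
  destruct s as [[m l] d], s' as [[m' l'] d']; cbv beta iota delta [nat_of_generator]; intros H.
  apply to_nat_injective in H; destruct H as [Hm H].
  apply to_nat_injective in H; destruct H as [Hl Hd].
  rewrite (nat_of_Z_injective _ _ Hm), (nat_of_list_injective _ b2n_injective _ _ Hl),
    (b2n_injective _ _ Hd); reflexivity.
Qed.

(* points of [A] with equal index lie in one orbit: pick a representative per index and
   encode each point by its index and a path from the representative *)
Lemma countable_orbit_cover (A : R -> Prop) (idx : R -> Z) :
  (forall a b, A a -> A b -> idx a = idx b -> orbit a b) -> countable_set A.
Proof.
  intros Horb.
  set (rep := fun m => epsilon (inhabits 0) (fun a => A a /\ idx a = m)).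
  assert (Hrep : forall a, A a -> A (rep (idx a)) /\ idx (rep (idx a)) = idx a).
  { intros a Ha; apply (epsilon_spec (inhabits 0) (fun b => A b /\ idx b = idx a)); eauto. }
  set (path_to := fun a => epsilon (inhabits nil) (fun l => gen_path (rep (idx a)) l a)).
  assert (Hpath : forall a, A a -> gen_path (rep (idx a)) (path_to a) a).
  { intros a Ha; apply (epsilon_spec (inhabits nil) (fun l => gen_path (rep (idx a)) l a)).
    destruct (Hrep a Ha); apply Horb; auto. }
  exists (fun a => Cantor.to_nat (nat_of_Z (idx a), nat_of_list nat_of_generator (path_to a))).
  intros a b Ha Hb H; apply to_nat_injective in H; destruct H as [Hidx Hl].
  apply nat_of_Z_injective in Hidx; apply (nat_of_list_injective _ nat_of_generator_injective) in Hl.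
  pose proof (Hpath a Ha) as Pa; rewrite Hidx, Hl in Pa.
  exact (gen_path_functional _ _ _ _ Pa (Hpath b Hb)).
Qed.

Lemma anonymous_predictor_transport {S : Type} (P : (R -> S) -> R -> S) f u x :
  predictor P -> anonymous T3 P -> T3 u -> (forall z, z < x -> f (u z) = f z) ->
  P f (u x) = P f x.
Proof.
  intros HP HA Hu Hfu.
  change (P f (u x)) with ((fun y => P f (u y)) x); rewrite <- (HA f u Hu); auto.
Qed.

(* every [a] in [m, m + 1) is the image of [m] under a [T3] map preserving orbits below [m] *)
Lemma anonymous_predictor_orbit_const (P : (R -> R -> Prop) -> R -> R -> Prop) (m : Z) a :
  predictor P -> anonymous T3 P -> IZR m <= a < IZR m + 1 -> P orbit a = P orbit (IZR m).
Proof.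
  intros HP HA Ha; set (x := a - IZR m); assert (Hx : 0 <= x < 1) by (unfold x; lra).
  replace a with (shift_map (IZR m) x (IZR m)) by (rewrite shift_map_at; unfold x; ring).
  apply anonymous_predictor_transport; auto; [apply shift_map_T3; auto|].
  intros z Hz; rewrite shift_map_below by auto; apply orbit_partial_map.
Qed.

Theorem theorem3 :
  exists (S : Type) (f : R -> S),
    forall P : (R -> S) -> (R -> S),
      predictor P -> anonymous T3 P ->
      countable_set (fun x : R => P f x = f x).
Proof.
  exists (R -> Prop), orbit; intros P HP HA.
  set (floor := fun a : R => (up a - 1)%Z).
  assert (Hfloor : forall a, IZR (floor a) <= a < IZR (floor a) + 1).
  { intros a; unfold floor; rewrite minus_IZR; destruct (archimed a); simpl; lra. }
  apply countable_orbit_cover with floor; intros a b Ha Hb Hab.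
  assert (Hclass : orbit a = orbit b).
  { rewrite <- Ha, <- Hb, (anonymous_predictor_orbit_const P (floor a) a),
      (anonymous_predictor_orbit_const P (floor b) b), Hab; auto. }
  rewrite Hclass; apply orbit_refl.
Qed.
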